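(* $\displaystyle\lim_{\alpha\to+\infty}\tilde\theta_\alpha=\frac\pi4.$
   Context: For $\alpha>0$ and $\theta\in\mathbb{R}$ set $C_{\alpha,\theta}=\frac{\sin(2\theta)}{2\alpha}$ and $P_{\alpha,\theta}(x)=\alpha^2+\cos(2\theta)x^2-C_{\alpha,\theta}^2x^4$. Let $\theta^+_\alpha=\pi/2$ if $\alpha>1$, and $\theta^+_\alpha=\frac12\arccos(1-2\alpha^2)$ if $\alpha\le1$. Define $$L(\alpha,\theta)=\int_{-1}^1\frac{2\alpha C_{\alpha,\theta}^2x^2-\alpha\cos(2\theta)+C_{\alpha,\theta}^2x^2\sqrt{P_{\alpha,\theta}(x)}}{\sqrt{(1-x^2)P_{\alpha,\theta}(x)}\,\big(\alpha+\sqrt{P_{\alpha,\theta}(x)}\big)}\,dx.$$ For each $\alpha>0$, $\tilde\theta_\alpha$ denotes the unique $\theta\in(0,\theta^+_\alpha)\cap(0,\pi/4)$ with $L(\alpha,\theta)=0$. *)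

From mathcomp Require Import all_boot all_order all_algebra.
From mathcomp Require Import all_classical all_reals all_analysis.
Set Implicit Arguments. Unset Strict Implicit. Unset Printing Implicit Defensive.
Import Order.TTheory GRing.Theory Num.Theory.
Import numFieldNormedType.Exports.
Local Open Scope classical_set_scope.
Local Open Scope ring_scope.

Section Defs.
Variable R : realType.

Definition Cat (a t : R) : R := sin (2 * t) / (2 * a).

Definition Pat (a t x : R) : R :=
  a ^+ 2 + cos (2 * t) * x ^+ 2 - (Cat a t) ^+ 2 * x ^+ 4.

Definition theta_plus (a : R) : R :=
  if 1 < a then pi / 2 else acos (1 - 2 * a ^+ 2) / 2.

Definition L_integrand (a t x : R) : R :=
  (2 * a * (Cat a t) ^+ 2 * x ^+ 2 - a * cos (2 * t)
     + (Cat a t) ^+ 2 * x ^+ 2 * Num.sqrt (Pat a t x))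
  / (Num.sqrt ((1 - x ^+ 2) * Pat a t x) * (a + Num.sqrt (Pat a t x))).

(* L(alpha, theta) = \int_{-1}^{1} integrand dx  (Lebesgue integral on [-1,1];
   the integrand is absolutely integrable for the admissible parameters) *)
Definition L (a t : R) : R :=
  Rintegral lebesgue_measure `[-1, 1]%classic (L_integrand a t).

End Defs.

(* For alpha >= 1 and cos(2 theta) >= 0 the integrand of L(alpha, theta) is
   dominated by 2 / sqrt(1 - x^2), whose integral over ]-1, 1[ is pi, so it is
   integrable; when moreover cos(2 theta) >= 2 / alpha^2 its numerator is at
   most -1/alpha while its denominator stays bounded, so the integrand is
   uniformly negative and L(alpha, theta) < 0.  Hence every zero theta of
   L(alpha, .) in (0, pi/4) satisfies 0 < cos(2 theta) < 2 / alpha^2, and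
   theta = acos(cos(2 theta)) / 2 tends to acos(0) / 2 = pi / 4. *)

From mathcomp Require Import all_boot all_order all_algebra.
From mathcomp Require Import all_classical all_reals all_analysis.
From mathcomp Require Import measurable_realfun ring lra.
Set Implicit Arguments. Unset Strict Implicit. Unset Printing Implicit Defensive.
Import Order.TTheory GRing.Theory Num.Theory.
Import numFieldNormedType.Exports.
Local Open Scope classical_set_scope.
Local Open Scope ring_scope.

Section ArcsineDensity.
Variable R : realType.
Local Notation mu := (@lebesgue_measure R).
Local Notation I11 := (`]-1, 1[%classic : set R).

Definition arcsine_density (x : R) : R := (Num.sqrt (1 - x ^+ 2))^-1.

Lemma subr_sqr_gt0 (x : R) : -1 < x < 1 -> 0 < 1 - x ^+ 2.
Proof. by move=> /andP[x_gtN1 x_lt1]; rewrite subr_gt0; nra. Qed.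

Lemma arcsine_density_ge0 (x : R) : 0 <= arcsine_density x.
Proof. by rewrite invr_ge0 sqrtr_ge0. Qed.

Lemma sqrt_one_sub_sqr_le1 (x : R) : Num.sqrt (1 - x ^+ 2) <= 1.
Proof. by rewrite -[leRHS]sqrtr1 ler_sqrt // gerBl sqr_ge0. Qed.

Lemma arcsine_density_ge1 (x : R) : -1 < x < 1 -> 1 <= arcsine_density x.
Proof.
by move=> /subr_sqr_gt0 ?; rewrite invf_ge1 ?sqrtr_gt0 ?sqrt_one_sub_sqr_le1.
Qed.

Lemma continuous_arcsine_density (x : R) : -1 < x < 1 ->
  {for x, continuous arcsine_density}.
Proof.
move=> /subr_sqr_gt0 x2_lt1.
apply: continuousV; first by rewrite sqrtr_eq0 -ltNge.
apply: (@continuous_comp _ _ _ (fun y : R => 1 - y ^+ 2)); last first.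
  exact: sqrt_continuous.
by apply: continuousB; [exact: cvg_cst | exact: exprn_continuous].
Qed.

Lemma measurable_arcsine_density : measurable_fun I11 arcsine_density.
Proof.
apply: open_continuous_measurable_fun; first exact: interval_open.
by move=> x; rewrite inE /= in_itv /=; exact: continuous_arcsine_density.
Qed.

Lemma integral_arcsine_density_itv (c d : R) : -1 < c -> c < d -> d < 1 ->
  (\int[mu]_(x in `[c, d]) (arcsine_density x)%:E = (asin d - asin c)%:E)%E.
Proof.
move=> c_gtN1 cd d_lt1.
have cd_sub (x : R) : c < x < d -> -1 < x < 1.
  by move=> /andP[cx xd]; rewrite (lt_trans c_gtN1 cx) (lt_trans xd d_lt1).
rewrite EFinB; apply: (continuous_FTC2 cd).
- apply: continuous_in_subspaceT => x; rewrite inE /= in_itv /= => /andP[cx xd].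
  apply: continuous_arcsine_density.
  by rewrite (lt_le_trans c_gtN1 cx) (le_lt_trans xd d_lt1).
- split.
  + move=> x; rewrite in_itv /= => /cd_sub x11.
    by have /@ex_derive := is_derive1_asin x11.
  + apply: cvg_at_right_filter; apply: continuous_asin.
    by rewrite c_gtN1 (lt_trans cd d_lt1).
  + apply: cvg_at_left_filter; apply: continuous_asin.
    by rewrite d_lt1 (lt_trans c_gtN1 cd).
- move=> x; rewrite in_itv /= => /cd_sub x11.
  by rewrite derive1E; have /@derive_val -> := is_derive1_asin x11.
Qed.

Definition itv_shrink (n : nat) : set R :=
  `[-1 + (n.+2%:R)^-1, 1 - (n.+2%:R)^-1].

Lemma itv_shrink_nondecreasing : {homo itv_shrink : n m / (n <= m)%N >-> (n <= m)%O}.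
Proof.
move=> n m nm; rewrite subsetEset; apply: subset_itv; rewrite bnd_simp.
- by rewrite lerD2l lef_pV2 ?posrE ?ltr0n // ler_nat !ltnS.
- by rewrite lerD2l lerN2 lef_pV2 ?posrE ?ltr0n // ler_nat !ltnS.
Qed.

Lemma bigcup_itv_shrink : \bigcup_n itv_shrink n = I11.
Proof.
apply/seteqP; split=> x /=.
  move=> [n _]; rewrite /itv_shrink /= !in_itv /=.
  have : 0 < (n.+2%:R : R)^-1 by rewrite invr_gt0 ltr0n.
  set r := (n.+2%:R)^-1 => r_gt0 /andP[? ?]; apply/andP; split; lra.
rewrite in_itv /= => /andP[x_gtN1 x_lt1].
set e := Num.min (1 + x) (1 - x).
have e_gt0 : 0 < e by rewrite lt_min; apply/andP; split; lra.
exists (Num.truncn e^-1) => //.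
have : ((Num.truncn e^-1).+2%:R : R)^-1 <= e.
  rewrite -[leRHS]invrK lef_pV2 ?posrE ?ltr0n ?invr_gt0 //.
  by rewrite (le_trans (ltW (truncnS_gt _))) // ler_nat.
have : e <= 1 + x by rewrite ge_min lexx.
have : e <= 1 - x by rewrite ge_min lexx orbT.
rewrite /itv_shrink /= in_itv /=.
set r := (_.+2%:R)^-1 => ? ? ?; apply/andP; split; lra.
Qed.

Lemma integral_arcsine_density_le_pi :
  (\int[mu]_(x in I11) (arcsine_density x)%:E <= pi%:E)%E.
Proof.
have mf : measurable_fun I11 (EFin \o arcsine_density).
  by apply/measurable_EFinP; exact: measurable_arcsine_density.
have shrink_sub n : itv_shrink n `<=` I11.
  by rewrite -bigcup_itv_shrink; exact: bigcup_sup.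
have := ge0_nondecreasing_set_cvg_integral (mu := mu) itv_shrink_nondecreasing
  (fun n => measurable_itv _)
  (fun n => measurable_funS (measurable_itv _) (shrink_sub n) mf)
  (fun n x _ => arcsine_density_ge0 x).
rewrite bigcup_itv_shrink => cvg_int.
rewrite -(cvg_lim _ cvg_int) //; apply: lime_le; first exact: cvgP cvg_int.
apply: nearW => n /=.
have : 0 < (n.+2%:R : R)^-1 by rewrite invr_gt0 ltr0n.
have : (n.+2%:R : R)^-1 < 1 by rewrite invf_lt1 ?ltr0n // ltr1n.
rewrite /itv_shrink; set r := (n.+2%:R)^-1 => r_lt1 r_gt0.
rewrite integral_arcsine_density_itv ?lee_fin; [|lra|lra|lra].
have : asin (1 - r) <= pi / 2 by apply: asin_lepi2; apply/andP; split; lra.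
have : - (pi / 2) <= asin (-1 + r) by apply: asin_geNpi2; apply/andP; split; lra.
lra.
Qed.

Lemma arcsine_density_integrable :
  mu.-integrable I11 (EFin \o arcsine_density).
Proof.
apply/integrableP; split.
  by apply/measurable_EFinP; exact: measurable_arcsine_density.
have -> : (\int[mu]_(x in I11) `|(EFin \o arcsine_density) x|
           = \int[mu]_(x in I11) (arcsine_density x)%:E)%E.
  by apply: eq_integral => x _; rewrite /comp abse_EFin ger0_norm ?arcsine_density_ge0.
exact: le_lt_trans integral_arcsine_density_le_pi (ltry _).
Qed.

Lemma arcsine_dominated_integrable (f : R -> R) (c : R) :
  measurable_fun I11 f -> (forall x, -1 < x < 1 -> `|f x| <= c * arcsine_density x) ->
  mu.-integrable I11 (EFin \o f).
Proof.
move=> mf f_le; have mI11 : measurable I11 := measurable_itv _.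
have cf_int : mu.-integrable I11 (fun x => c%:E * (arcsine_density x)%:E)%E.
  by apply: integrableZl; [exact: mI11 | exact: arcsine_density_integrable].
refine (@le_integrable _ _ _ mu I11 mI11 (EFin \o f) _ _ _ cf_int).
  exact/measurable_EFinP.
move=> x; rewrite /= in_itv /= => x11.
by rewrite lee_fin (le_trans (f_le x x11)) // ler_norm.
Qed.

End ArcsineDensity.

(* The numerator of the integrand in terms of k = C^2 x^2, q = sqrt(P) and
   c = cos(2 theta), using P = alpha^2 + c x^2 - k x^2 and 4 alpha^2 k <= 1. *)
Lemma integrand_numerator_bounds (R : realFieldType) (a c k x2 q : R) :
  1 <= a -> 0 <= c <= 1 -> 0 <= k -> k * (4 * a ^+ 2) <= 1 -> 0 <= x2 < 1 ->
  0 <= q -> q ^+ 2 = a ^+ 2 + c * x2 - k * x2 ->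
  [/\ a / 2 <= q, q <= a + 1, a * (2 * a * k - a * c + k * q) <= 1 - a ^+ 2 * c
    & `|2 * a * k - a * c + k * q| <= a].
Proof.
move=> a_ge1 /andP[c_ge0 c_le1] k_ge0 k_le /andP[x2_ge0 x2_lt1] q_ge0 q2E.
have a2_ge1 : 1 <= a ^+ 2 by nra.
have k_le14 : k <= 1 / 4.
  have : 0 <= k * (a ^+ 2 - 1) by nra.
  nra.
have q_ge : a / 2 <= q by nra.
have q_le : q <= a + 1 by nra.
have num_le : a * (2 * a * k - a * c + k * q) <= 1 - a ^+ 2 * c.
  have : a * k * q <= a * k * (a + 1) by apply: ler_wpM2l; nra.
  nra.
split => //; rewrite ler_norml; apply/andP; split; first by nra.
have : a * (2 * a * k - a * c + k * q) <= 1 by nra.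
nra.
Qed.

Section IntegrandBounds.
Variables (R : realType) (a t : R).
Local Notation I11 := (`]-1, 1[%classic : set R).

Let k (x : R) : R := Cat a t ^+ 2 * x ^+ 2.
Let q (x : R) : R := Num.sqrt (Pat a t x).
Let num (x : R) : R := 2 * a * k x - a * cos (2 * t) + k x * q x.

Let k_ge0 (x : R) : 0 <= k x.
Proof. by rewrite mulr_ge0 ?sqr_ge0. Qed.

Let k_le (x : R) : 0 < a -> -1 < x < 1 -> k x * (4 * a ^+ 2) <= 1.
Proof.
move=> a_gt0 /subr_sqr_gt0 x2_lt1.
have -> : k x * (4 * a ^+ 2) = sin (2 * t) ^+ 2 * x ^+ 2.
  by rewrite /k /Cat; field; lra.
have := sin_le1 (2 * t); have := sin_geN1 (2 * t); have := sqr_ge0 x; nra.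
Qed.

Let PatE (x : R) : Pat a t x = a ^+ 2 + cos (2 * t) * x ^+ 2 - k x * x ^+ 2.
Proof. by rewrite /Pat /k; ring. Qed.

Let L_integrandE (x : R) : -1 < x < 1 ->
  L_integrand a t x = num x / (Num.sqrt (1 - x ^+ 2) * (q x * (a + q x))).
Proof.
move=> x11; rewrite /L_integrand sqrtrM ?(ltW (subr_sqr_gt0 x11)) //.
by congr (_ / _); rewrite /num /k /q; ring.
Qed.

Lemma Pat_gt0 (x : R) : 1 <= a -> 0 <= cos (2 * t) -> -1 < x < 1 ->
  0 < Pat a t x.
Proof.
move=> a_ge1 cos_ge0 x11; rewrite PatE.
have a2_ge1 : 1 <= a ^+ 2 by nra.
have k_le14 : k x <= 1 / 4.
  by have := k_le (lt_le_trans ltr01 a_ge1) x11; have := k_ge0 x; nra.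
have kx2_le : k x * x ^+ 2 <= k x.
  by rewrite ler_piMr ?k_ge0 //; have := subr_sqr_gt0 x11; lra.
have : 0 <= cos (2 * t) * x ^+ 2 by rewrite mulr_ge0 ?sqr_ge0.
lra.
Qed.

Let num_bounds (x : R) : 1 <= a -> 0 <= cos (2 * t) -> -1 < x < 1 ->
  [/\ a / 2 <= q x, q x <= a + 1, a * num x <= 1 - a ^+ 2 * cos (2 * t)
    & `|num x| <= a].
Proof.
move=> a_ge1 cos_ge0 x11.
have c_bnd : 0 <= cos (2 * t) <= 1 by rewrite cos_ge0 cos_le1.
have x2_bnd : 0 <= x ^+ 2 < 1 by rewrite sqr_ge0 /=; have := subr_sqr_gt0 x11; lra.
have k_le1 := k_le (lt_le_trans ltr01 a_ge1) x11.
apply: (integrand_numerator_bounds a_ge1 c_bnd (k_ge0 x) k_le1 x2_bnd (sqrtr_ge0 _)).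
by rewrite sqr_sqrtr; [exact: PatE | exact: ltW (Pat_gt0 a_ge1 cos_ge0 x11)].
Qed.

Lemma normr_L_integrand_le (x : R) : 1 <= a -> 0 <= cos (2 * t) -> -1 < x < 1 ->
  `|L_integrand a t x| <= 2 * arcsine_density x.
Proof.
move=> a_ge1 cos_ge0 x11; have [q_ge _ _ num_le] := num_bounds a_ge1 cos_ge0 x11.
have w_gt0 : 0 < Num.sqrt (1 - x ^+ 2) by rewrite sqrtr_gt0 subr_sqr_gt0.
have d_ge : a / 2 * (a + a / 2) <= q x * (a + q x) by apply: ler_pM; lra.
have d_gt0 : 0 < q x * (a + q x) by apply: lt_le_trans d_ge; nra.
rewrite L_integrandE // normrM normfV (gtr0_norm (mulr_gt0 w_gt0 d_gt0)).
rewrite invfM mulrCA -/(arcsine_density x) [leRHS]mulrC.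
by rewrite ler_wpM2l ?arcsine_density_ge0 // ler_pdivrMr //; nra.
Qed.

Lemma L_integrand_le (x : R) : 1 <= a -> 2 / a ^+ 2 <= cos (2 * t) ->
  -1 < x < 1 -> L_integrand a t x <= - (a * ((a + 1) * (2 * a + 1)))^-1.
Proof.
move=> a_ge1 cos_ge x11; have a_gt0 : 0 < a by lra.
have cos_ge0 : 0 <= cos (2 * t) by apply: le_trans cos_ge; rewrite divr_ge0 ?sqr_ge0.
have [q_ge q_le num_ub _] := num_bounds a_ge1 cos_ge0 x11.
have num_le : num x <= - a^-1.
  move: cos_ge; rewrite ler_pdivrMr ?exprn_gt0 // => cos_ge.
  by rewrite -mulN1r ler_pdivlMr // mulrC; lra.
set w := Num.sqrt (1 - x ^+ 2).
have w_gt0 : 0 < w by rewrite sqrtr_gt0 subr_sqr_gt0.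
have w_le1 : w <= 1 := sqrt_one_sub_sqr_le1 x.
have d_gt0 : 0 < w * (q x * (a + q x)) by rewrite !mulr_gt0 //; lra.
have d_le : w * (q x * (a + q x)) <= (a + 1) * (2 * a + 1).
  have : q x * (a + q x) <= (a + 1) * (2 * a + 1) by apply: ler_pM; lra.
  by nra.
rewrite L_integrandE //.
apply: (@le_trans _ _ (- a^-1 / (w * (q x * (a + q x))))).
  by rewrite ler_pM2r ?invr_gt0.
rewrite mulNr lerN2 invfM ler_pM2l ?invr_gt0 // lef_pV2 ?posrE //.
by rewrite !mulr_gt0 //; lra.
Qed.

Lemma continuous_L_integrand (x : R) : 1 <= a -> 0 <= cos (2 * t) ->
  -1 < x < 1 -> {for x, continuous (L_integrand a t)}.
Proof.
move=> a_ge1 cos_ge0 x11; have P_gt0 := Pat_gt0 a_ge1 cos_ge0 x11.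
have cmono (c : R) n y : {for y, continuous (fun z : R => c * z ^+ n)}.
  by apply: continuousM; [exact: cvg_cst | exact: exprn_continuous].
have cPat y : {for y, continuous (Pat a t)}.
  by apply: continuousB; [apply: continuousD; [exact: cvg_cst | exact: cmono] |
                          exact: cmono].
have csqrt (f : R -> R) y : {for y, continuous f} ->
    {for y, continuous (fun z => Num.sqrt (f z))}.
  by move=> cf; apply: continuous_comp cf _; exact: sqrt_continuous.
apply: continuousM.
  apply: continuousD; last by apply: continuousM; [exact: cmono | exact: csqrt].
  by apply: continuousB; [exact: cmono | exact: cvg_cst].
apply: continuousV.
  rewrite mulf_neq0 // gt_eqF //; last by rewrite ltr_pwDl ?sqrtr_ge0 //; lra.
  by rewrite sqrtr_gt0 mulr_gt0 ?subr_sqr_gt0.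
apply: continuousM; last by apply: continuousD; [exact: cvg_cst | exact: csqrt].
apply: csqrt; apply: continuousM => //.
by apply: continuousB; [exact: cvg_cst | exact: exprn_continuous].
Qed.

Lemma L_integrand_integrable : 1 <= a -> 0 <= cos (2 * t) ->
  (@lebesgue_measure R).-integrable I11 (EFin \o L_integrand a t).
Proof.
move=> a_ge1 cos_ge0.
apply: arcsine_dominated_integrable => [|x]; last exact: normr_L_integrand_le.
apply: open_continuous_measurable_fun; first exact: interval_open.
by move=> x; rewrite inE /= in_itv /=; exact: continuous_L_integrand.
Qed.

Lemma L_lt0 : 1 <= a -> 2 / a ^+ 2 <= cos (2 * t) -> L a t < 0.
Proof.
move=> a_ge1 cos_ge; set m := a * ((a + 1) * (2 * a + 1)).
have cos_ge0 : 0 <= cos (2 * t) by apply: le_trans cos_ge; rewrite divr_ge0 ?sqr_ge0.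
have m_gt0 : 0 < m by rewrite !mulr_gt0 //; lra.
have L_int := L_integrand_integrable a_ge1 cos_ge0.
have cst_int : (@lebesgue_measure R).-integrable I11 (EFin \o cst (- m^-1)).
  apply: (arcsine_dominated_integrable (c := m^-1)) => [|x x11].
    exact: measurable_cst.
  rewrite /= normrN gtr0_norm ?invr_gt0 // -[leLHS]mulr1.
  by rewrite ler_wpM2l ?invr_ge0 ?(ltW m_gt0) // arcsine_density_ge1.
have -> : L a t = \int[lebesgue_measure]_(x in I11) L_integrand a t x.
  by rewrite /L /Rintegral integral_itv_bndoo //; case/integrableP: L_int.
apply: (@le_lt_trans _ _ (\int[lebesgue_measure]_(x in I11) cst (- m^-1) x)).
  apply: le_Rintegral => // x; rewrite /= in_itv /=.
  exact: L_integrand_le.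
have mu11 : fine (lebesgue_measure I11) = 2.
  by rewrite lebesgue_measure_itv /= lte_fin ifT ?opprK //; lra.
by rewrite Rintegral_cst // mu11 mulNr oppr_lt0 mulr_gt0 ?invr_gt0.
Qed.

End IntegrandBounds.

Lemma cos_lt_of_L_eq0 (R : realType) (a t : R) :
  1 <= a -> 0 < t < pi / 4 -> L a t = 0 -> 0 < cos (2 * t) < 2 / a ^+ 2.
Proof.
move=> a_ge1 /andP[t_gt0 t_lt] L_eq0.
have cos_gt0 : 0 < cos (2 * t).
  by apply: cos_gt0_pihalf; have := pi_gt0 R; rewrite -ltr_norml gtr0_norm; lra.
rewrite cos_gt0 ltNge /=; apply/negP => /(L_lt0 a_ge1).
by rewrite L_eq0 ltxx.
Qed.

Lemma cvg_half_angle_pi4 (R : realType) (T : Type) (F : set_system T)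
    {FF : Filter F} (f : T -> R) :
  (\forall x \near F, 0 <= f x <= pi / 2) ->
  cos (2 * f x) @[x --> F] --> 0 -> f x @[x --> F] --> pi / 4.
Proof.
move=> f_range cos_cvg0.
have -> : pi / 4 = acos (0 : R) / 2 by rewrite acos0; field.
have acos_cvg : acos (cos (2 * f x)) @[x --> F] --> acos (0 : R).
  by apply: cvg_comp cos_cvg0 _; apply: continuous_acos; rewrite ltrN10 ltr01.
have half_cvg : acos (cos (2 * f x)) / 2 @[x --> F] --> acos (0 : R) / 2.
  exact: cvgMr_tmp.
apply: cvg_trans half_cvg; apply: near_eq_cvg; near=> x.
have /andP[f_ge0 f_le] : 0 <= f x <= pi / 2 by near: x.
rewrite cosK; first by field.
by rewrite in_itv /=; apply/andP; split; lra.
Unshelve. all: by end_near.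
Qed.

Lemma cvg_div_sqr_pinfty (R : realType) (c : R) : c / a ^+ 2 @[a --> +oo] --> 0.
Proof.
have inv_cvg0 : (a ^+ 2)^-1 @[a --> +oo] --> (0 : R).
  apply/gtr0_cvgV0; last exact: cvgr_expr2.
  near=> a; have a_gt0 : 0 < a by near: a; apply: nbhs_pinfty_gt; exact: num_real.
  by rewrite exprn_gt0.
by have := cvgMl_tmp (a := c) inv_cvg0; rewrite mulr0; apply.
Unshelve. all: by end_near.
Qed.

Theorem lemma4p6 (R : realType) (thetat : R -> R) :
  (forall a : R, 0 < a ->
     [/\ 0 < thetat a, thetat a < theta_plus a, thetat a < pi / 4
       & L a (thetat a) = 0]) ->
  thetat a @[a --> +oo] --> pi / 4.
Proof.
move=> thetat_zero.
have cos_bounds : \forall a \near +oo, 0 < cos (2 * thetat a) < 2 / a ^+ 2.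
  near=> a; have a_ge1 : 1 <= a by near: a; apply: nbhs_pinfty_ge; exact: num_real.
  have [t_gt0 _ t_lt hL] := thetat_zero a (lt_le_trans ltr01 a_ge1).
  by apply: (cos_lt_of_L_eq0 a_ge1 _ hL); rewrite t_gt0.
apply: cvg_half_angle_pi4.
  near=> a; have a_gt0 : 0 < a by near: a; apply: nbhs_pinfty_gt; exact: num_real.
  have [t_gt0 _ t_lt _] := thetat_zero a a_gt0.
  by have := pi_gt0 R; rewrite ltW //=; lra.
apply: (@squeeze_cvgr _ _ _ _ (cst 0) (fun a => 2 / a ^+ 2)).
- near=> a; have /andP[cos_gt0 cos_lt] : 0 < cos (2 * thetat a) < 2 / a ^+ 2.
    by near: a.
  by rewrite /= !ltW.
- exact: cvg_cst.
- exact: cvg_div_sqr_pinfty.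
Unshelve. all: by end_near.
Qed.
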